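(* Let $n\ge1$ and $a_k(\rho)=\tfrac12(\rho^k+\rho^{-k})$. Let $\rho_n^*>1$ denote the unique root in $(1,\infty)$ of $a_{n+1}(\rho)-(n+1)a_1(\rho)=0$. Then $$\min_{z\in\mathcal{E}_\rho}|U_n(z)|=\begin{cases}\dfrac{\rho^{n+1}-\rho^{-n-1}}{\rho+\rho^{-1}}, & n\text{ odd},\ \rho>1,\\[2mm] \dfrac{\rho^{n+1}+\rho^{-n-1}}{\rho+\rho^{-1}}, & n\text{ even},\ \rho\ge\rho_n^*,\end{cases}$$ and in both cases the minimum is attained if and only if $z=\pm\tfrac{i}{2}(\rho-\rho^{-1})$.
   Context: $U_n$ is the Chebyshev polynomial of the second kind, $U_n(\cos\theta)=\sin((n+1)\theta)/\sin\theta$. The Bernstein ellipse is $\mathcal{E}_\rho=\{\tfrac12(u+u^{-1}): u=\rho e^{i\theta},\ 0\le\theta<2\pi\}$. *)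

From Stdlib Require Import Reals.
Open Scope R_scope.

Record C := mkC { Re : R ; Im : R }.

Definition Cadd (z w : C) : C := mkC (Re z + Re w) (Im z + Im w).
Definition Csub (z w : C) : C := mkC (Re z - Re w) (Im z - Im w).
Definition Cmul (z w : C) : C :=
  mkC (Re z * Re w - Im z * Im w) (Re z * Im w + Im z * Re w).
Definition Cone : C := mkC 1 0.
Definition Ctwo : C := mkC 2 0.
Definition Cmod (z : C) : R := sqrt (Re z * Re z + Im z * Im z).

Fixpoint chebU (n : nat) (z : C) : C :=
  match n with
  | O => Cone
  | S m =>
    match m with
    | O => Cmul Ctwo z
    | S k => Csub (Cmul (Cmul Ctwo z) (chebU m z)) (chebU k z)
    end
  end.

Definition a_k (k : nat) (rho : R) : R := (rho ^ k + / rho ^ k) / 2.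

(* Bernstein ellipse E_rho = { (u + u^{-1})/2 : u = rho e^{i theta} },
   written out: (u+u^{-1})/2 = (rho+rho^{-1})/2 cos theta + i (rho-rho^{-1})/2 sin theta. *)
Definition in_bernstein (rho : R) (z : C) : Prop :=
  exists theta : R,
    z = mkC ((rho + / rho) / 2 * cos theta) ((rho - / rho) / 2 * sin theta).

Definition min_attained_exactly (n : nat) (rho m : R) : Prop :=
  (forall z, in_bernstein rho z -> m <= Cmod (chebU n z)) /\
  (exists z, in_bernstein rho z /\ Cmod (chebU n z) = m) /\
  (forall z, in_bernstein rho z ->
     (Cmod (chebU n z) = m <->
      (z = mkC 0 ((rho - / rho) / 2) \/ z = mkC 0 (- ((rho - / rho) / 2))))).

(** Write [z = (u + u^-1)/2] with [u = rho e^(i theta)]. Then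
    [U_n(z) (u - u^-1) = u^(n+1) - u^-(n+1)] and
    [|u^k - u^-k|^2 = (rho^k + rho^-k)^2 - 4 cos^2 (k theta)], so
    [|U_n(z)|^2 ((rho + rho^-1)^2 - 4 cos^2 theta)
       = (rho^(n+1) + rho^-(n+1))^2 - 4 cos^2 ((n+1) theta)].
    Comparing with the value at [cos theta = 0] leaves a defect that is a sum of squares when
    [n] is odd; when [n] is even it is [4 (A cos^2 theta - B cos^2 ((n+1) theta))], with
    [A = (rho^(n+1) + rho^-(n+1))^2] and [B = (rho + rho^-1)^2], which is nonnegative because
    [|cos (N theta)| <= N |cos theta|] for odd [N] and because [A >= (n+1)^2 B] beyond the
    critical radius [rho_n^*]: the gap [a_(n+1) - (n+1) a_1] is positive for large [rho] and
    vanishes only at [rho_n^*] on [(1, oo)], so by the intermediate value theorem it cannot be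
    negative beyond it. *)
From Pilot Require Import Defs.
From Stdlib Require Import Reals Ranalysis5 Lra Lia Psatz.
Open Scope R_scope.

Definition Cnorm2 (z : Defs.C) : R := Re z * Re z + Im z * Im z.

Lemma Cnorm2_ge0 (z : Defs.C) : 0 <= Cnorm2 z.
Proof. unfold Cnorm2; nra. Qed.

Lemma Cnorm2_mul (z w : Defs.C) : Cnorm2 (Cmul z w) = Cnorm2 z * Cnorm2 w.
Proof. destruct z, w; unfold Cnorm2, Cmul; simpl; ring. Qed.

Definition bernstein_point (rho th : R) : Defs.C :=
  mkC ((rho + / rho) / 2 * cos th) ((rho - / rho) / 2 * sin th).

(* [u^k - u^-k] for [u = rho e^(i th)]. *)
Definition joukowski_diff (rho th : R) (k : nat) : Defs.C :=
  mkC ((rho ^ k - / rho ^ k) * cos (INR k * th))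
      ((rho ^ k + / rho ^ k) * sin (INR k * th)).

Lemma joukowski_diff_rec (rho th : R) (k : nat) : rho <> 0 ->
  joukowski_diff rho th (S (S k)) =
  Csub (Cmul (Cmul Ctwo (bernstein_point rho th)) (joukowski_diff rho th (S k)))
       (joukowski_diff rho th k).
Proof.
  intros Hrho.
  assert (Hpow : rho ^ k <> 0) by (apply pow_nonzero; exact Hrho).
  set (b := INR (S k) * th).
  assert (Hnext : INR (S (S k)) * th = b + th) by (unfold b; rewrite (S_INR (S k)); ring).
  assert (Hprev : INR k * th = b - th) by (unfold b; rewrite (S_INR k); ring).
  unfold joukowski_diff, bernstein_point, Csub, Cmul, Ctwo; cbv [Re Im].
  rewrite Hnext, Hprev, cos_plus, sin_plus, cos_minus, sin_minus; fold b.
  change (rho ^ S (S k)) with (rho * (rho * rho ^ k)).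
  change (rho ^ S k) with (rho * rho ^ k).
  apply (f_equal2 mkC); field; auto.
Qed.

Lemma chebU_mul_joukowski_diff (n : nat) (rho th : R) : rho <> 0 ->
  Cmul (chebU n (bernstein_point rho th)) (joukowski_diff rho th 1) =
  joukowski_diff rho th (S n).
Proof.
  intros Hrho.
  set (z := bernstein_point rho th); set (J := joukowski_diff rho th).
  enough (H : forall m, Cmul (chebU m z) (J 1%nat) = J (S m) /\
                        Cmul (chebU (S m) z) (J 1%nat) = J (S (S m))) by apply H.
  intros m; induction m as [|k [IH1 IH2]]; split.
  - destruct (J 1%nat); unfold Cmul, Cone; simpl; apply (f_equal2 mkC); ring.
  - unfold J; rewrite joukowski_diff_rec by exact Hrho; fold J z.
    replace (J 0%nat) with (mkC 0 0)
      by (unfold J, joukowski_diff; simpl; rewrite Rmult_0_l, sin_0, cos_0, Rinv_1;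
          apply (f_equal2 mkC); ring).
    destruct z, (J 1%nat); unfold Cmul, Csub, Ctwo; simpl; apply (f_equal2 mkC); ring.
  - exact IH2.
  - change (chebU (S (S k)) z) with (Csub (Cmul (Cmul Ctwo z) (chebU (S k) z)) (chebU k z)).
    unfold J; rewrite (joukowski_diff_rec _ _ (S k)) by exact Hrho; fold J z.
    rewrite <- IH1, <- IH2.
    destruct z, (chebU (S k) _), (chebU k _), (J 1%nat); unfold Cmul, Csub, Ctwo; simpl.
    apply (f_equal2 mkC); ring.
Qed.

Lemma Cnorm2_joukowski_diff (rho th : R) (k : nat) : rho <> 0 ->
  Cnorm2 (joukowski_diff rho th k) =
  (rho ^ k + / rho ^ k) ^ 2 - 4 * cos (INR k * th) ^ 2.
Proof.
  intros Hrho.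
  assert (Hpow : rho ^ k <> 0) by (apply pow_nonzero; exact Hrho).
  assert (Hinv : rho ^ k * / rho ^ k = 1) by (field; exact Hpow).
  pose proof (sin2_cos2 (INR k * th)) as Hpyth; unfold Rsqr in Hpyth.
  unfold Cnorm2, joukowski_diff; cbv [Re Im].
  transitivity ((rho ^ k + / rho ^ k) ^ 2 *
                  (sin (INR k * th) * sin (INR k * th) + cos (INR k * th) * cos (INR k * th))
                - 4 * (rho ^ k * / rho ^ k) * cos (INR k * th) ^ 2); [ring|].
  rewrite Hpyth, Hinv; ring.
Qed.

Lemma Cnorm2_chebU_bernstein (n : nat) (rho th : R) : rho <> 0 ->
  Cnorm2 (chebU n (bernstein_point rho th)) * ((rho + / rho) ^ 2 - 4 * cos th ^ 2) =
  (rho ^ (n + 1) + / rho ^ (n + 1)) ^ 2 - 4 * cos (INR (n + 1) * th) ^ 2.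
Proof.
  intros Hrho.
  pose proof (f_equal Cnorm2 (chebU_mul_joukowski_diff n rho th Hrho)) as H.
  rewrite Cnorm2_mul, !Cnorm2_joukowski_diff in H by exact Hrho.
  rewrite Nat.add_1_r, <- H.
  simpl INR; rewrite Rmult_1_l, pow_1; reflexivity.
Qed.

Lemma Rabs_sin_mult_le (k : nat) (x : R) : Rabs (sin (INR k * x)) <= INR k * Rabs (sin x).
Proof.
  induction k as [|k IH].
  - simpl; rewrite Rmult_0_l, sin_0, Rabs_R0; lra.
  - rewrite S_INR, Rmult_plus_distr_r, Rmult_1_l, sin_plus.
    pose proof (Rabs_triang (sin (INR k * x) * cos x) (cos (INR k * x) * sin x)) as Htri.
    rewrite !Rabs_mult in Htri.
    assert (Rabs (cos x) <= 1) by (apply Rabs_le, COS_bound).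
    assert (Rabs (cos (INR k * x)) <= 1) by (apply Rabs_le, COS_bound).
    pose proof (Rabs_pos (sin (INR k * x))); pose proof (Rabs_pos (sin x)).
    nra.
Qed.

Lemma Rabs_sin_mult_lt (k : nat) (x : R) : (2 <= k)%nat -> sin x <> 0 ->
  Rabs (sin (INR k * x)) < INR k * Rabs (sin x).
Proof.
  intros Hk Hsin; destruct k as [|j]; [lia|].
  assert (Hj : 1 <= INR j) by (apply (le_INR 1); lia).
  rewrite S_INR, Rmult_plus_distr_r, Rmult_1_l, sin_plus.
  pose proof (Rabs_triang (sin (INR j * x) * cos x) (cos (INR j * x) * sin x)) as Htri.
  rewrite !Rabs_mult in Htri.
  assert (Hs : 0 < Rabs (sin x)) by (apply Rabs_pos_lt; exact Hsin).
  assert (Hc : Rabs (cos x) < 1).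
  { pose proof (sin2_cos2 x) as Hpyth; unfold Rsqr in Hpyth.
    apply Rabs_def1; nra. }
  assert (Rabs (cos (INR j * x)) <= 1) by (apply Rabs_le, COS_bound).
  pose proof (Rabs_sin_mult_le j x).
  pose proof (Rabs_pos (sin (INR j * x))); pose proof (Rabs_pos (cos x)).
  assert (Rabs (sin (INR j * x)) * Rabs (cos x) < INR j * Rabs (sin x)).
  { destruct (Req_dec (sin (INR j * x)) 0) as [Hz|Hz].
    - rewrite Hz, Rabs_R0; nra.
    - assert (0 < Rabs (sin (INR j * x))) by (apply Rabs_pos_lt; exact Hz); nra. }
  nra.
Qed.

Lemma sin_plus_mult_PI_sqr (y : R) (m : nat) : sin (y + INR m * PI) ^ 2 = sin y ^ 2.
Proof.
  induction m as [|m IH]; [simpl; rewrite Rmult_0_l, Rplus_0_r; reflexivity|].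
  rewrite S_INR, Rmult_plus_distr_r, Rmult_1_l, <- Rplus_assoc, neg_sin, <- IH; ring.
Qed.

Lemma cos_odd_mult_sqr (m : nat) (x : R) :
  cos (INR (2 * m + 1) * x) ^ 2 = sin (INR (2 * m + 1) * (PI / 2 + x)) ^ 2.
Proof.
  replace (INR (2 * m + 1) * (PI / 2 + x)) with ((PI / 2 + INR (2 * m + 1) * x) + INR m * PI)
    by (rewrite plus_INR, mult_INR; simpl INR; field).
  rewrite sin_plus_mult_PI_sqr, <- cos_sin; reflexivity.
Qed.

Lemma cos_odd_mult_sqr_le (m : nat) (x : R) :
  cos (INR (2 * m + 1) * x) ^ 2 <= INR (2 * m + 1) ^ 2 * cos x ^ 2.
Proof.
  rewrite cos_odd_mult_sqr, (cos_sin x), <- (pow2_abs (sin (INR _ * _))),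
    <- (pow2_abs (sin (PI / 2 + x))), <- Rpow_mult_distr.
  apply pow_incr; split; [apply Rabs_pos | apply Rabs_sin_mult_le].
Qed.

Lemma cos_odd_mult_sqr_lt (m : nat) (x : R) : (1 <= m)%nat -> cos x <> 0 ->
  cos (INR (2 * m + 1) * x) ^ 2 < INR (2 * m + 1) ^ 2 * cos x ^ 2.
Proof.
  intros Hm Hcos.
  rewrite cos_odd_mult_sqr, (cos_sin x), <- (pow2_abs (sin (INR _ * _))),
    <- (pow2_abs (sin (PI / 2 + x))), <- Rpow_mult_distr.
  rewrite (cos_sin x) in Hcos.
  pose proof (Rabs_pos (sin (INR (2 * m + 1) * (PI / 2 + x)))).
  pose proof (Rabs_sin_mult_lt (2 * m + 1) (PI / 2 + x) ltac:(lia) Hcos).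
  nra.
Qed.

Lemma cos_eq_0_mult (x : R) (m : nat) : cos x = 0 ->
  sin (INR (2 * m) * x) = 0 /\ cos (INR (2 * m + 1) * x) = 0.
Proof.
  intros Hcos.
  assert (Hsin2 : sin (2 * x) = 0) by (rewrite sin_2a, Hcos; ring).
  induction m as [|m [IHs IHc]].
  - simpl; rewrite Rmult_0_l, sin_0, Rmult_1_l; auto.
  - replace (INR (2 * S m) * x) with (INR (2 * m) * x + 2 * x)
      by (rewrite !mult_INR, (S_INR m); simpl INR; ring).
    replace (INR (2 * S m + 1) * x) with (INR (2 * m + 1) * x + 2 * x)
      by (rewrite !plus_INR, !mult_INR, (S_INR m); simpl INR; ring).
    rewrite sin_plus, cos_plus, IHs, IHc, Hsin2; split; ring.
Qed.

Lemma nonneg_beyond_unique_root (f : R -> R) (a r0 x : R) :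
  (forall y, a < y -> continuity_pt f y) ->
  (forall y, a < y -> exists z, y < z /\ 0 < f z) ->
  (forall y, a < y -> f y = 0 -> y = r0) ->
  a < r0 -> r0 <= x -> 0 <= f x.
Proof.
  intros Hcont Hpos Huniq Har0 Hr0x.
  destruct (Rle_lt_dec 0 (f x)) as [Hx|Hx]; [exact Hx|exfalso].
  destruct (Hpos x ltac:(lra)) as [z [Hxz Hz]].
  destruct (IVT_interv f x z) as [y [[Hxy Hyz] Hy]]; [|exact Hxz|exact Hx|exact Hz|].
  - intros y Hy; apply Hcont; lra.
  - assert (y = r0) by (apply Huniq; [lra | exact Hy]).
    assert (y = x) by lra; subst; lra.
Qed.

Definition a_gap (n : nat) (r : R) : R := a_k (n + 1) r - INR (n + 1) * a_k 1 r.

Lemma continuity_pt_a_gap (n : nat) (r : R) : 0 < r -> continuity_pt (a_gap n) r.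
Proof.
  intros Hr; unfold a_gap, a_k; reg; apply pow_nonzero; lra.
Qed.

Lemma a_gap_pos (n : nat) (r : R) : (1 <= n)%nat -> INR n + 2 <= r -> 0 < a_gap n r.
Proof.
  intros Hn Hr.
  assert (Hn1 : 1 <= INR n) by (apply (le_INR 1); exact Hn).
  assert (Hsq : r ^ 2 <= r ^ (n + 1)) by (apply Rle_pow; [lra | lia]).
  assert (Hinv : 0 < / r ^ (n + 1)) by (apply Rinv_0_lt_compat, pow_lt; lra).
  assert (Hr1 : / r <= 1) by (rewrite <- Rinv_1; apply Rinv_le_contravar; lra).
  unfold a_gap, a_k; rewrite plus_INR; simpl INR; simpl (r ^ 1); simpl (r ^ 2) in Hsq.
  rewrite Rmult_1_r.
  nra.
Qed.

Lemma bernstein_point_on_imag_axis (rho th : R) : 0 < rho ->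
  (bernstein_point rho th = mkC 0 ((rho - / rho) / 2) \/
   bernstein_point rho th = mkC 0 (- ((rho - / rho) / 2))) <-> cos th = 0.
Proof.
  intros Hrho.
  assert (Hsum : 0 < rho + / rho) by (pose proof (Rinv_0_lt_compat rho Hrho); lra).
  unfold bernstein_point; split.
  - intros [H|H]; injection H; intros _ Hre; nra.
  - intros Hcos.
    pose proof (sin2_cos2 th) as Hpyth; unfold Rsqr in Hpyth; rewrite Hcos in Hpyth.
    rewrite Hcos, Rmult_0_r.
    destruct (Rmult_integral (sin th - 1) (sin th + 1)) as [Hs|Hs]; [nra | left | right].
    + replace (sin th) with 1 by lra; apply (f_equal2 mkC); ring.
    + replace (sin th) with (-1) by lra; apply (f_equal2 mkC); ring.
Qed.

Lemma min_attained_exactly_of_Cnorm2 (n : nat) (rho m : R) : 0 < rho -> 0 <= m ->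
  (forall th, m * m <= Cnorm2 (chebU n (bernstein_point rho th)) /\
     (Cnorm2 (chebU n (bernstein_point rho th)) = m * m <-> cos th = 0)) ->
  min_attained_exactly n rho m.
Proof.
  intros Hrho Hm Hmin.
  assert (Hmod : forall th, Cmod (chebU n (bernstein_point rho th)) = m <-> cos th = 0).
  { intros th; destruct (Hmin th) as [_ <-].
    unfold Cmod; fold (Cnorm2 (chebU n (bernstein_point rho th))).
    pose proof (Cnorm2_ge0 (chebU n (bernstein_point rho th))).
    split; intros Heq; [rewrite <- Heq, sqrt_sqrt | rewrite Heq, sqrt_square]; auto. }
  split; [|split].
  - intros z [th ->]; fold (bernstein_point rho th).
    destruct (Hmin th) as [Hle _]; unfold Cmod; fold (Cnorm2 (chebU n (bernstein_point rho th))).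
    rewrite <- (sqrt_square m) by exact Hm; apply sqrt_le_1_alt, Hle.
  - exists (bernstein_point rho (PI / 2)); split; [exists (PI / 2); reflexivity|].
    apply Hmod, cos_PI2.
  - intros z [th ->]; fold (bernstein_point rho th).
    rewrite Hmod, bernstein_point_on_imag_axis by exact Hrho; reflexivity.
Qed.

Lemma min_attained_exactly_of_defect (n : nat) (rho p : R) : 1 < rho -> 0 <= p ->
  (forall th,
     p ^ 2 * ((rho + / rho) ^ 2 - 4 * cos th ^ 2) <=
     ((rho ^ (n + 1) + / rho ^ (n + 1)) ^ 2 - 4 * cos (INR (n + 1) * th) ^ 2) * (rho + / rho) ^ 2 /\
     (p ^ 2 * ((rho + / rho) ^ 2 - 4 * cos th ^ 2) =
      ((rho ^ (n + 1) + / rho ^ (n + 1)) ^ 2 - 4 * cos (INR (n + 1) * th) ^ 2) * (rho + / rho) ^ 2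
      <-> cos th = 0)) ->
  min_attained_exactly n rho (p / (rho + / rho)).
Proof.
  intros Hrho Hp Hdefect.
  assert (Hinv : rho * / rho = 1) by (field; lra).
  assert (Hsum : 0 < rho + / rho) by (pose proof (Rinv_0_lt_compat rho ltac:(lra)); lra).
  apply min_attained_exactly_of_Cnorm2;
    [lra | unfold Rdiv; apply Rmult_le_pos; [lra | left; apply Rinv_0_lt_compat; lra] |].
  intros th.
  pose proof (Cnorm2_chebU_bernstein n rho th ltac:(lra)) as Hkey.
  set (X := Cnorm2 _) in *; set (V := _ - 4 * cos (INR (n + 1) * th) ^ 2) in *.
  set (s := rho + / rho) in *; set (B := s ^ 2) in *; set (D := B - 4 * cos th ^ 2) in *.
  destruct (Hdefect th) as [Hle Heq]; fold V B D in Hle, Heq.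
  (* [D = (rho - 1/rho)^2 + 4 sin^2 th > 0] *)
  assert (HD : 0 < D).
  { pose proof (COS_bound th); assert (0 < rho - / rho) by nra.
    unfold D, B, s.
    replace ((rho + / rho) ^ 2) with ((rho - / rho) ^ 2 + 4 * (rho * / rho)) by ring.
    rewrite Hinv; nra. }
  assert (HB : 0 < B) by (unfold B; nra).
  assert (Hm : p / s * (p / s) = p ^ 2 / B) by (unfold B; field; lra).
  rewrite Hm, <- Heq.
  split.
  - apply (Rmult_le_reg_r (D * B)); [nra|].
    replace (p ^ 2 / B * (D * B)) with (p ^ 2 * D) by (field; lra); nra.
  - split; intros H.
    + rewrite <- Hkey, H; field; lra.
    + apply (Rmult_eq_reg_r (D * B)); [|nra].
      replace (p ^ 2 / B * (D * B)) with (p ^ 2 * D) by (field; lra).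
      rewrite H, <- Hkey; ring.
Qed.

Lemma defect_odd (P s c cN sN : R) : 1 < P -> 0 < s -> cN ^ 2 + sN ^ 2 = 1 ->
  (c = 0 -> sN = 0) ->
  (P - / P) ^ 2 * (s ^ 2 - 4 * c ^ 2) <= ((P + / P) ^ 2 - 4 * cN ^ 2) * s ^ 2 /\
  ((P - / P) ^ 2 * (s ^ 2 - 4 * c ^ 2) = ((P + / P) ^ 2 - 4 * cN ^ 2) * s ^ 2 <-> c = 0).
Proof.
  intros HP Hs Hpyth Hzero.
  assert (Hgap : 0 < (P - / P) ^ 2).
  { assert (/ P < 1) by (rewrite <- Rinv_1; apply Rinv_lt_contravar; lra); nra. }
  assert (Hdefect : ((P + / P) ^ 2 - 4 * cN ^ 2) * s ^ 2 - (P - / P) ^ 2 * (s ^ 2 - 4 * c ^ 2)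
                    = 4 * (s ^ 2 * sN ^ 2 + (P - / P) ^ 2 * c ^ 2)).
  { transitivity (4 * (P * / P) * s ^ 2 - 4 * cN ^ 2 * s ^ 2 + 4 * (P - / P) ^ 2 * c ^ 2); [ring|].
    replace (P * / P) with 1 by (field; lra); rewrite <- Hpyth; ring. }
  split; [nra|split].
  - intros Heq.
    assert (0 <= s ^ 2 * sN ^ 2) by nra; assert (0 <= (P - / P) ^ 2 * c ^ 2) by nra.
    destruct (Req_dec c 0) as [Hc|Hc]; [exact Hc|exfalso].
    assert (0 < c ^ 2) by (rewrite <- Rsqr_pow2; apply Rsqr_pos_lt, Hc); nra.
  - intros Hc; specialize (Hzero Hc); subst c sN; lra.
Qed.

Lemma defect_even (P s K c cN : R) : 0 < P -> 0 < s -> 0 <= K -> K * s <= P + / P ->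
  cN ^ 2 <= K ^ 2 * c ^ 2 -> (c <> 0 -> cN ^ 2 < K ^ 2 * c ^ 2) -> (c = 0 -> cN = 0) ->
  (P + / P) ^ 2 * (s ^ 2 - 4 * c ^ 2) <= ((P + / P) ^ 2 - 4 * cN ^ 2) * s ^ 2 /\
  ((P + / P) ^ 2 * (s ^ 2 - 4 * c ^ 2) = ((P + / P) ^ 2 - 4 * cN ^ 2) * s ^ 2 <-> c = 0).
Proof.
  intros HP Hs HK HKs Hle Hlt Hzero.
  assert (Hdefect : ((P + / P) ^ 2 - 4 * cN ^ 2) * s ^ 2 - (P + / P) ^ 2 * (s ^ 2 - 4 * c ^ 2)
                    = 4 * ((P + / P) ^ 2 * c ^ 2 - s ^ 2 * cN ^ 2)) by ring.
  assert (HKs2 : (K * s) ^ 2 <= (P + / P) ^ 2)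
    by (apply pow_incr; split; [apply Rmult_le_pos; lra | exact HKs]).
  assert (Hc2 : 0 <= c ^ 2) by nra.
  assert (Hbound : s ^ 2 * cN ^ 2 <= (P + / P) ^ 2 * c ^ 2).
  { apply Rle_trans with ((K * s) ^ 2 * c ^ 2); [|apply Rmult_le_compat_r; assumption].
    rewrite Rpow_mult_distr, (Rmult_comm (K ^ 2)), Rmult_assoc.
    apply Rmult_le_compat_l; [nra | exact Hle]. }
  split; [nra|split].
  - intros Heq; destruct (Req_dec c 0) as [Hc|Hc]; [exact Hc|].
    specialize (Hlt Hc); assert (0 < s ^ 2) by nra; nra.
  - intros Hc; specialize (Hzero Hc); subst c cN; lra.
Qed.

Theorem mainTheorem6 (n : nat) (rho : R) :
  (1 <= n)%nat -> 1 < rho ->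
  (Nat.odd n = true ->
     min_attained_exactly n rho
       ((rho ^ (n + 1) - / rho ^ (n + 1)) / (rho + / rho))) /\
  (Nat.even n = true ->
     forall rho_star : R,
       1 < rho_star ->
       a_k (n + 1) rho_star - INR (n + 1) * a_k 1 rho_star = 0 ->
       (forall r : R, 1 < r -> a_k (n + 1) r - INR (n + 1) * a_k 1 r = 0 -> r = rho_star) ->
       rho_star <= rho ->
       min_attained_exactly n rho
         ((rho ^ (n + 1) + / rho ^ (n + 1)) / (rho + / rho))).
Proof.
  intros Hn Hrho.
  assert (HP : 1 < rho ^ (n + 1)) by (apply Rlt_pow_R1; [exact Hrho | lia]).
  assert (HPinv : 0 < / rho ^ (n + 1)) by (apply Rinv_0_lt_compat; lra).
  assert (HPinv1 : / rho ^ (n + 1) < 1) by (rewrite <- Rinv_1; apply Rinv_lt_contravar; lra).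
  assert (Hs : 0 < rho + / rho) by (pose proof (Rinv_0_lt_compat rho ltac:(lra)); lra).
  split.
  - intros Hodd; apply Nat.odd_spec in Hodd as [k Hk].
    apply min_attained_exactly_of_defect; [exact Hrho | lra |].
    intros th; apply defect_odd with (sN := sin (INR (n + 1) * th)); [exact HP | exact Hs | |].
    + rewrite Rplus_comm; pose proof (sin2_cos2 (INR (n + 1) * th)) as H; unfold Rsqr in H; lra.
    + intros Hc; replace (n + 1)%nat with (2 * (k + 1))%nat by lia.
      apply (cos_eq_0_mult th (k + 1) Hc).
  - intros Heven rho_star Hstar _ Huniq Hle.
    apply Nat.even_spec in Heven as [k Hk].
    assert (Hgap : 0 <= a_gap n rho).
    { apply (nonneg_beyond_unique_root (a_gap n) 1 rho_star rho); try assumption.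
      - intros y Hy; apply continuity_pt_a_gap; lra.
      - intros y Hy; exists (y + INR n + 2); split; [pose proof (pos_INR n); lra|].
        apply a_gap_pos; [exact Hn | pose proof (pos_INR n); lra]. }
    unfold a_gap, a_k in Hgap; rewrite pow_1 in Hgap.
    apply min_attained_exactly_of_defect; [exact Hrho | lra |].
    intros th; replace (n + 1)%nat with (2 * k + 1)%nat in * by lia.
    apply defect_even with (K := INR (2 * k + 1)); try lra.
    + apply pos_INR.
    + apply cos_odd_mult_sqr_le.
    + apply cos_odd_mult_sqr_lt; lia.
    + intros Hc; apply (cos_eq_0_mult th k Hc).
Qed.
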